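(* Let $G$ be a finite group and $\mathcal{O}$ a conjugacy class of involutions of $G$. Then $\mathcal{O}$ is of type D if and only if there exist $r,s\in\mathcal{O}$ such that the order of $rs$ is even and at least $6$.
   Context: A conjugacy class $\mathcal{O}$ of a group (regarded as a rack with $x\triangleright y=xyx^{-1}$) is of type D iff there exist $r,s\in\mathcal{O}$ with $(rs)^2\neq(sr)^2$ such that $r$ and $s$ are not conjugate in the subgroup $\langle r,s\rangle$. (In rack terms: a rack is of type D if it contains a subrack that is a disjoint union $R\sqcup S$ of two subracks with $r\triangleright(s\triangleright(r\triangleright s))\neq s$ for some $r\in R$, $s\in S$.) *)

From mathcomp Require Import all_boot all_fingroup.
Set Implicit Arguments. Unset Strict Implicit. Unset Printing Implicit Defensive.
Local Open Scope group_scope.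

Definition type_D (gT : finGroupType) (O : {set gT}) : Prop :=
  exists r s : gT,
    [/\ r \in O, s \in O, (r * s) ^+ 2 != (s * r) ^+ 2
      & s \notin r ^: <<[set r; s]>>].

From mathcomp Require Import all_boot all_fingroup.
From mathcomp Require Import cyclic zify.
Local Open Scope group_scope.
Set Implicit Arguments. Unset Strict Implicit.

(* Two involutions r, s generate a dihedral group with rotation t = r s, and
   s r = t^-1.  Hence (rs)^2 = (sr)^2 iff t^4 = 1, i.e. #[t] is 1, 2 or 4.
   When #[t] is odd, a power of t conjugates r to s.  When #[t] is even, the
   coset <[t^2]> r contains r, is stable under conjugation by r and s, and
   does not contain s, since otherwise t would lie in the proper subgroup
   <[t^2]> of <[t]>. *)

Lemma even_dvdn4 n : 0 < n -> ~~ odd n -> (n %| 4) = (n < 6).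
Proof. by case: n => [|[|[|[|[|[|n]]]]]]. Qed.

Section TwoInvolutions.
Variables (gT : finGroupType) (r s : gT).
Hypotheses (rr1 : r * r = 1) (ss1 : s * s = 1).

Local Notation t := (r * s).
Local Notation D := <<[set r; s]>>.

Let rV : r^-1 = r. Proof. exact: mulg1_eq. Qed.
Let sV : s^-1 = s. Proof. exact: mulg1_eq. Qed.

Lemma invM_involutions : t^-1 = s * r.
Proof. by rewrite invMg rV sV. Qed.

Lemma conjg_rot_gen g : g \in [set r; s] -> t ^ g = t^-1.
Proof.
rewrite invM_involutions !inE => /orP[] /eqP->; rewrite conjgE ?rV ?sV.
  by rewrite !mulgA rr1 mul1g.
by rewrite -!mulgA ss1 mulg1.
Qed.

Lemma conjg_involution_rotX j : r ^ (t ^+ j) = (s * r) ^+ (2 * j) * r.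
Proof.
elim: j => [|j IHj]; first by rewrite conjg1 muln0 mul1g.
have tJ : t^-1 ^ t = t^-1 by rewrite conjgE mulVg mulg1.
have rJ : r ^ t = (s * r) ^+ 2 * r.
  rewrite conjgE invM_involutions expgS expg1 -!mulgA; congr (s * _).
  by rewrite rr1 mulg1 mulgA rr1 mul1g.
rewrite expgSr conjgM IHj conjMg conjXg -invM_involutions tJ rJ.
by rewrite invM_involutions mulgA -expgD mulnS addnC.
Qed.

Lemma involutions_conj_odd : odd #[t] -> s \in r ^: D.
Proof.
move=> odd_t; apply/imsetP; exists (t ^+ #[t]./2.+1).
  by rewrite groupX // groupM // mem_gen // !inE eqxx ?orbT.
rewrite conjg_involution_rotX.
have -> : (2 * #[t]./2.+1 = #[t] + 1)%N.
  by have := odd_double_half #[t]; rewrite odd_t -muln2; lia.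
rewrite expgD -invM_involutions expVgn expg_order.
by rewrite invg1 mul1g expg1 invM_involutions -mulgA rr1 mulg1.
Qed.

Local Notation E := <[t ^+ 2]>.

Lemma rot2_norm_gen g : g \in [set r; s] -> g \in 'N(E).
Proof. by move=> Dg; rewrite inE -cycleJ conjXg conjg_rot_gen // expVgn cycleV. Qed.

Lemma conjg_involution_gen g : g \in [set r; s] -> r ^ g \in E :* r.
Proof.
rewrite !inE => /orP[] /eqP->; rewrite conjgE ?rV ?sV.
  by rewrite rr1 mulg1 rcoset_refl.
apply/rcosetP; exists ((s * r) ^+ 2); last first.
  by rewrite expgS expg1 -!mulgA rr1 mulg1.
by rewrite -invM_involutions expVgn groupV cycle_id.
Qed.

Lemma rcoset_rot2_norm : D \subset 'N(E :* r).
Proof.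
rewrite gen_subG; apply/subsetP=> g Dg; rewrite inE.
apply/subsetP=> _ /imsetP[z /rcosetP[e Ee ->] ->].
rewrite conjMg; have /rcosetP[e' Ee' ->] := conjg_involution_gen Dg.
by rewrite mulgA mem_rcoset mulgK groupM // memJ_norm // rot2_norm_gen.
Qed.

Lemma rot_notin_rot2 : ~~ odd #[t] -> t \notin E.
Proof.
rewrite -dvdn2 -cycle_subG => /gcdn_idPr two_t; apply/negP=> /subset_leq_card.
rewrite -!orderE orderXgcd two_t leq_divRL //.
by have := order_gt0 t; lia.
Qed.

Lemma involutions_nconj_even : ~~ odd #[t] -> s \notin r ^: D.
Proof.
move=> even_t; apply: contra (rot_notin_rot2 even_t) => /imsetP[g Dg s_rg].
have Es : s \in E :* r.
  by rewrite {1}s_rg memJ_norm ?rcoset_refl ?(subsetP rcoset_rot2_norm).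
by move: Es; rewrite mem_rcoset rV -invM_involutions groupV.
Qed.

Lemma rot_square_eq_dvd4 : (t ^+ 2 == (s * r) ^+ 2) = (#[t] %| 4)%N.
Proof. by rewrite -invM_involutions expVgn eq_sym eq_invg_mul -expgD order_dvdn. Qed.

Lemma involution_pair_type_D :
  (t ^+ 2 != (s * r) ^+ 2) && (s \notin r ^: D) = ~~ odd #[t] && (6 <= #[t])%N.
Proof.
have [odd_t | even_t] := boolP (odd #[t]).
  by rewrite involutions_conj_odd ?andbF.
rewrite involutions_nconj_even // rot_square_eq_dvd4.
by rewrite even_dvdn4 ?order_gt0 // -leqNgt andbT.
Qed.

End TwoInvolutions.

Lemma class_involution (gT : finGroupType) (G : {group gT}) (x y : gT) :
  #[x] = 2 -> y \in x ^: G -> y * y = 1.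
Proof. by move=> ox /imsetP[g _ ->]; have := expg_order (x ^ g); rewrite orderJ ox. Qed.

Theorem lemma2p6 (gT : finGroupType) (G : {group gT}) (x : gT) :
  x \in G -> #[x] = 2 ->
  type_D (x ^: G) <->
  exists r s : gT, [/\ r \in x ^: G, s \in x ^: G,
                      ~~ odd #[r * s] & 6 <= #[r * s]].
Proof.
move=> _ ox; have invO := class_involution (G := G) ox.
split=> [[r [s [Or Os rs_sr r_ns]]] | [r [s [Or Os even_rs ge6_rs]]]].
  have /andP[even_rs ge6_rs] : ~~ odd #[r * s] && (6 <= #[r * s])%N.
    by rewrite -involution_pair_type_D ?invO // rs_sr r_ns.
  by exists r, s.
have /andP[rs_sr r_ns] : ((r * s) ^+ 2 != (s * r) ^+ 2) && (s \notin r ^: <<[set r; s]>>).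
  by rewrite involution_pair_type_D ?invO // even_rs ge6_rs.
by exists r, s.
Qed.
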